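(* Every quotient of a finite weakly-top group is weakly-top. Every quotient of a finite top group is top.
   Context: For a group $H$, $H'$ denotes its commutator subgroup. A finite group $G$ is weakly-top if $|H/H'| \leq |G/G'|$ for every proper subgroup $H<G$, and top if $|H/H'| < |G/G'|$ for every proper subgroup $H<G$. *)

From mathcomp Require Import all_boot all_fingroup all_solvable.
Set Implicit Arguments. Unset Strict Implicit. Unset Printing Implicit Defensive.
Local Open Scope group_scope.

Definition weakly_top (gT : finGroupType) (G : {set gT}) : Prop :=
  forall H : {group gT}, H \proper G -> #|H / H^`(1)| <= #|G / G^`(1)|.

Definition top (gT : finGroupType) (G : {set gT}) : Prop :=
  forall H : {group gT}, H \proper G -> #|H / H^`(1)| < #|G / G^`(1)|.

(* For N <| H, since (H / N)' = H'N / N, the abelianization of H splits as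
   |H : H'| = |N : N :&: H'| * |H / N : (H / N)'|.  Every proper subgroup of G / N
   is H / N for a proper subgroup H of G containing N, and H' <= G' makes the
   first factor for H at least the one for G, so the (strict) inequality between
   the abelianizations of H and G descends to H / N and G / N. *)
From mathcomp Require Import all_boot all_fingroup all_solvable.
Set Implicit Arguments.
Unset Strict Implicit.
Unset Printing Implicit Defensive.
Local Open Scope group_scope.

Lemma leq_of_mul_leq_factor (a b m n : nat) :
  0 < b -> b <= a -> a * m <= b * n -> m <= n.
Proof.
move=> b_gt0 le_ba le_am_bn; rewrite -(leq_pmul2l (leq_trans b_gt0 le_ba)).
exact: leq_trans le_am_bn (leq_mul le_ba (leqnn n)).
Qed.

Lemma ltn_of_mul_leq_factor (a b m n : nat) :
  0 < b -> b <= a -> a * m < b * n -> m < n.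
Proof.
move=> b_gt0 le_ba lt_am_bn; rewrite -(ltn_pmul2l (leq_trans b_gt0 le_ba)).
exact: leq_trans lt_am_bn (leq_mul le_ba (leqnn n)).
Qed.

Lemma card_abelianization_quotient (gT : finGroupType) (N H : {group gT}) :
  N <| H -> #|H / H^`(1)| = (#|N : H^`(1)| * #|(H / N) / (H / N)^`(1)|)%N.
Proof.
case/andP=> sNH nNH.
rewrite !card_quotient ?der_norm //= -quotient_der //.
by rewrite -(index_quotient_ker (der_sub 1 H) nNH) (setIidPr sNH) mulnC.
Qed.

Lemma proper_quotient_preimage (gT : finGroupType) (N G : {group gT})
    (K : {group coset_of N}) :
  N <| G -> K \proper G / N ->
  exists2 H : {group gT}, H \proper G & N <| H /\ K :=: H / N.
Proof.
move=> nsNG ltKG; case/inv_quotientS: (proper_sub ltKG) => // H defK sNH sHG.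
have nsNH : N <| H := normalS sNH sHG nsNG.
by exists H; rewrite // -(quotient_proper nsNH nsNG) -defK.
Qed.

Theorem lemma2p2 (gT : finGroupType) (G N : {group gT}) :
  N <| G ->
  (weakly_top G -> weakly_top (G / N)) /\ (top G -> top (G / N)).
Proof.
move=> nsNG.
have descend (K : {group coset_of N}) : K \proper G / N ->
    exists2 H : {group gT}, H \proper G &
      #|N : G^`(1)| <= #|N : H^`(1)| /\
      #|H / H^`(1)| = (#|N : H^`(1)| * #|K / K^`(1)|)%N.
  case/(proper_quotient_preimage nsNG) => H ltHG [nsNH ->].
  exists H => //; split; last exact: card_abelianization_quotient.
  exact: dvdn_leq (indexg_gt0 _ _) (indexgS _ (dergS 1 (proper_sub ltHG))).
have indexN_gt0 : 0 < #|N : G^`(1)| := indexg_gt0 N G^`(1).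
split=> topG K /descend[H /topG + [le_index defH]];
  rewrite defH (card_abelianization_quotient nsNG).
- exact: leq_of_mul_leq_factor indexN_gt0 le_index.
- exact: ltn_of_mul_leq_factor indexN_gt0 le_index.
Qed.
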